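(* Let $d\ge1$, $N\ge2$, let $a:\mathbb{Z}^d\to\mathbb{R}$ define a symmetric, spatially homogeneous, irreducible random walk satisfying condition (F) or condition (HT), let $x_1,\dots,x_N\in\mathbb{Z}^d$ be distinct, and let $\mathscr{H}_\beta=\mathscr{A}+\beta\sum_{i=1}^N\delta_{x_i}\delta_{x_i}^T$ with $\beta>\beta_c$. Let $\lambda_0(\beta)$ be the largest positive eigenvalue of $\mathscr{H}_\beta$. Then every other positive eigenvalue of $\mathscr{H}_\beta$ (i.e. each of $\lambda_1(\beta),\dots,\lambda_{N-1}(\beta)$) has multiplicity at most $N-1$.
   Context: $a$ satisfies $a(0)<0$, $a(z)\ge0$ for $z\ne0$, $a(z)=a(-z)$, $\sum_z a(z)=0$, and irreducibility (every $z\in\mathbb{Z}^d$ is a finite sum of vectors $z_i$ with $a(z_i)\ne0$). $(\mathscr{A}u)(x)=\sum_{x'}a(x-x')u(x')$ on $l^2(\mathbb{Z}^d)$; $\delta_x$ is the indicator vector of $x$. Condition (F): $\sum_z|z|^2a(z)<\infty$. Condition (HT): $a(z)\sim H(z/|z|)|z|^{-(d+\alpha)}$ as $|z|\to\infty$ for some $\alpha\in(0,2)$ and some continuous positive symmetric function $H$ on $\mathbb{S}^{d-1}$. $\beta_c$ is the minimal value of $\beta$ such that the spectrum of $\mathscr{H}_\beta$ contains positive eigenvalues for all $\beta>\beta_c$ sufficiently close to $\beta_c$. The positive eigenvalues of $\mathscr{H}_\beta$ listed with multiplicity are denoted $\lambda_0(\beta)>\lambda_1(\beta)\ge\dots\ge\lambda_{N-1}(\beta)>0$.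 *)

From HB Require Import structures.
From mathcomp Require Import all_boot all_order all_algebra.
From mathcomp Require Import all_classical all_reals all_analysis.
Set Implicit Arguments. Unset Strict Implicit. Unset Printing Implicit Defensive.
Import Order.TTheory GRing.Theory Num.Theory.
Import numFieldNormedType.Exports.
Local Open Scope ring_scope.
Local Open Scope classical_set_scope.

Definition pt (d : nat) := 'rV[int]_d.

Section Defs.
Variables (R : realType) (d : nat).

Definition sqnorm (z : pt d) : R := \sum_(i < d) ((z 0 i)%:~R) ^+ 2.

Definition dir (z : pt d) : 'rV[R]_d :=
  (Num.sqrt (sqnorm z))^-1 *: map_mx (fun k : int => k%:~R) z.

Definition sphere : set 'rV[R]_d := [set v | \sum_(i < d) (v 0 i) ^+ 2 = 1].

Definition abs_summable (f : pt d -> R) : Prop :=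
  (\esum_(x in [set: pt d]) (`| f x |)%:E < +oo)%E.

Definition rsum (f : pt d -> R) : R :=
  fine (\esum_(x in [set: pt d]) (Num.max (f x) 0)%:E)
  - fine (\esum_(x in [set: pt d]) (Num.max (- f x) 0)%:E).

Definition l2 (u : pt d -> R) : Prop :=
  (\esum_(x in [set: pt d]) ((u x) ^+ 2)%:E < +oo)%E.

Definition opA (a : pt d -> R) (u : pt d -> R) (x : pt d) : R :=
  rsum (fun x' => a (x - x') * u x').

Definition opH (N : nat) (a : pt d -> R) (xs : 'I_N -> pt d) (beta : R)
  (u : pt d -> R) (x : pt d) : R :=
  opA a u x + beta * \sum_(i < N) (if x == xs i then u (xs i) else 0).

Definition is_eigenvalue (op : (pt d -> R) -> pt d -> R) (lam : R) : Prop :=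
  exists u : pt d -> R, [/\ l2 u, u <> (fun _ => 0) & forall x, op u x = lam * u x].

Definition eigenspace_dim_le (op : (pt d -> R) -> pt d -> R) (lam : R) (m : nat)
  : Prop :=
  forall v : 'I_m.+1 -> pt d -> R,
    (forall k, l2 (v k) /\ forall x, op (v k) x = lam * v k x) ->
    exists c : 'I_m.+1 -> R,
      (exists k, c k != 0) /\ forall x, \sum_(k < m.+1) c k * v k x = 0.

Definition rw_kernel (a : pt d -> R) : Prop :=
  [/\ a 0 < 0,
      (forall z, z != 0 -> 0 <= a z),
      (forall z, a z = a (- z)),
      abs_summable a & rsum a = 0].

Definition irreducible_kernel (a : pt d -> R) : Prop :=
  forall z : pt d, exists s : seq (pt d),
    all (fun w => a w != 0) s /\ z = \sum_(w <- s) w.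

Definition condF (a : pt d -> R) : Prop :=
  (\esum_(z in [set: pt d]) (sqnorm z * a z)%:E < +oo)%E.

(* condition (HT): a(z) ~ H(z/|z|) |z|^{-(d+alpha)} as |z| -> oo *)
Definition condHT (a : pt d -> R) : Prop :=
  exists (alpha : R) (H : 'rV[R]_d -> R),
    [/\ 0 < alpha < 2,
        {within sphere, continuous H},
        (forall v, sphere v -> 0 < H v),
        (forall v, sphere v -> H (- v) = H v) &
        forall e : R, 0 < e -> exists M : R, forall z : pt d,
          M < Num.sqrt (sqnorm z) ->
          `| a z / (H (dir z) * (Num.sqrt (sqnorm z)) `^ (- (d%:R + alpha))) - 1 | < e].

Definition beta_c_candidate (N : nat) (a : pt d -> R) (xs : 'I_N -> pt d) (b : R)
  : Prop :=
  exists2 eps : R, 0 < eps & forall beta, b < beta < b + eps ->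
    exists lam, 0 < lam /\ is_eigenvalue (opH a xs beta) lam.

Definition is_beta_c (N : nat) (a : pt d -> R) (xs : 'I_N -> pt d) (bc : R) : Prop :=
  beta_c_candidate a xs bc /\ forall b, beta_c_candidate a xs b -> bc <= b.

Definition largest_pos_eigenvalue (op : (pt d -> R) -> pt d -> R) (lam0 : R) : Prop :=
  [/\ 0 < lam0, is_eigenvalue op lam0 &
      forall lam, 0 < lam -> is_eigenvalue op lam -> lam <= lam0].

End Defs.

From HB Require Import structures.
From mathcomp Require Import all_boot all_order all_algebra.
From mathcomp Require Import all_classical all_reals all_analysis.
From mathcomp Require Import ring lra.
Set Implicit Arguments. Unset Strict Implicit. Unset Printing Implicit Defensive.
Import Order.TTheory GRing.Theory Num.Theory.
Import numFieldNormedType.Exports.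
Local Open Scope ring_scope.
Local Open Scope classical_set_scope.

(* The generator A is symmetric and nonpositive on l^2:
   <A f, f> = -1/2 sum_{x,y} a(x - y) (f x - f y)^2 <= 0.  The perturbation of H_beta
   only sees the values at x_1, ..., x_N.  So if v and w are eigenvectors of H_beta for
   distinct positive eigenvalues lam and mu (hence orthogonal, H_beta being symmetric) and
   v + w vanishes at every x_i, then H_beta (v + w) = A (v + w) and
   0 >= <A (v + w), v + w> = lam |v|^2 + mu |w|^2, forcing v = w = 0.  Thus evaluation at
   x_1, ..., x_N is injective on the lam-eigenspace plus the line of a lam0-eigenvector,
   whence the lam-eigenspace has dimension at most N - 1. *)

Section NonnegSum.
Variables (R : realType) (T : choiceType).
Implicit Types (g h : T -> R) (c : R).

Definition nnsummable g := (\esum_(x in [set: T]) (g x)%:E < +oo)%E.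
Definition nnsum g : R := fine (\esum_(x in [set: T]) (g x)%:E).

Lemma nnsumE g : (forall x, 0 <= g x) -> nnsummable g ->
  \esum_(x in [set: T]) (g x)%:E = (nnsum g)%:E.
Proof.
move=> g0 sg; rewrite fineK // ge0_fin_numE //.
by apply: esum_ge0 => x _; rewrite lee_fin.
Qed.

Lemma nnsum_ge0 g : (forall x, 0 <= g x) -> 0 <= nnsum g.
Proof. by move=> g0; rewrite fine_ge0 // esum_ge0 // => x _; rewrite lee_fin. Qed.

Lemma nnsum_ge g x : (forall y, 0 <= g y) -> nnsummable g -> g x <= nnsum g.
Proof.
move=> g0 sg; rewrite -lee_fin -nnsumE //; apply: esum_ge.
exists [set x]; first by split => //; exact: finite_set1.
by rewrite fsbig_set1.
Qed.

Lemma nnsummable_le g h : (forall x, 0 <= g x) -> (forall x, g x <= h x) ->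
  nnsummable h -> nnsummable g.
Proof. by move=> g0 gh; apply: le_lt_trans; apply: le_esum => x _; rewrite lee_fin. Qed.

Lemma nnsummable0 : nnsummable (fun _ => 0).
Proof. by rewrite /nnsummable esum1. Qed.

Lemma nnsum0 : nnsum (fun _ => 0) = 0.
Proof. by rewrite /nnsum esum1. Qed.

Lemma esumD_nnsum g h : (forall x, 0 <= g x) -> (forall x, 0 <= h x) ->
  nnsummable g -> nnsummable h ->
  \esum_(x in [set: T]) (g x + h x)%:E = (nnsum g + nnsum h)%:E.
Proof.
move=> g0 h0 sg sh; under eq_esum do rewrite EFinD.
by rewrite esumD ?nnsumE // => x _; rewrite lee_fin.
Qed.

Lemma nnsummableD g h : (forall x, 0 <= g x) -> (forall x, 0 <= h x) ->
  nnsummable g -> nnsummable h -> nnsummable (fun x => g x + h x).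
Proof. by move=> g0 h0 sg sh; rewrite /nnsummable esumD_nnsum ?ltry. Qed.

Lemma nnsumD g h : (forall x, 0 <= g x) -> (forall x, 0 <= h x) ->
  nnsummable g -> nnsummable h -> nnsum (fun x => g x + h x) = nnsum g + nnsum h.
Proof. by move=> g0 h0 sg sh; rewrite /nnsum esumD_nnsum. Qed.

Lemma ge0_esumZl c (e : T -> \bar R) : 0 <= c -> (forall x, (0 <= e x)%E) ->
  \esum_(x in [set: T]) (c%:E * e x)%E = (c%:E * \esum_(x in [set: T]) e x)%E.
Proof.
move=> c0 e0; rewrite /esum -ereal_supZl //; last first.
  by apply/set0P; exists 0%E, set0; [exact: fsets_set0 | rewrite fsbig_set0].
congr ereal_sup; apply/seteqP; split => y /=.
  by move=> [A FA <-]; exists (\sum_(x \in A) e x)%E; [exists A | rewrite ge0_mule_fsumr].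
by move=> [_ [A FA <-] <-]; exists A => //; rewrite ge0_mule_fsumr.
Qed.

Lemma esumZ_nnsum c g : 0 <= c -> (forall x, 0 <= g x) -> nnsummable g ->
  \esum_(x in [set: T]) (c * g x)%:E = (c * nnsum g)%:E.
Proof.
move=> c0 g0 sg; under eq_esum do rewrite EFinM.
by rewrite ge0_esumZl ?nnsumE // => x; rewrite lee_fin.
Qed.

Lemma nnsummableZ c g : 0 <= c -> (forall x, 0 <= g x) -> nnsummable g ->
  nnsummable (fun x => c * g x).
Proof. by move=> c0 g0 sg; rewrite /nnsummable esumZ_nnsum ?ltry. Qed.

Lemma nnsumZ c g : 0 <= c -> (forall x, 0 <= g x) -> nnsummable g ->
  nnsum (fun x => c * g x) = c * nnsum g.
Proof. by move=> c0 g0 sg; rewrite /nnsum esumZ_nnsum. Qed.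

Lemma esum_reindex (e : T -> T) (G : T -> \bar R) : bijective e ->
  \esum_(x in [set: T]) G (e x) = \esum_(x in [set: T]) G x.
Proof.
by move=> be; rewrite [RHS](reindex_esum [set: T] [set: T] e) // setTT_bijective.
Qed.

Lemma nnsummable_reindex (e : T -> T) g : bijective e ->
  nnsummable (fun x => g (e x)) = nnsummable g.
Proof. by move=> be; rewrite /nnsummable (esum_reindex (fun x => (g x)%:E)). Qed.

Lemma nnsum_reindex (e : T -> T) g : bijective e ->
  nnsum (fun x => g (e x)) = nnsum g.
Proof. by move=> be; rewrite /nnsum (esum_reindex (fun x => (g x)%:E)). Qed.

End NonnegSum.

Section SignedSum.
Variables (R : realType) (T : choiceType).
Implicit Types (f g p n : T -> R) (c : R).

(* On [pt d] these are [abs_summable] and [rsum]; they are stated over any choiceType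
   so as to also sum over pairs. *)
Definition asummable f := nnsummable (fun x => `|f x|).
Definition ssum f : R := nnsum f^\+ - nnsum f^\-.

Lemma asummable_le f g : (forall x, `|f x| <= g x) -> nnsummable g -> asummable f.
Proof. by move=> fg; apply: nnsummable_le. Qed.

Lemma asummable_pos f : asummable f -> nnsummable f^\+.
Proof.
by apply: nnsummable_le => // x; rewrite /funrpos ge_max ler_norm normr_ge0.
Qed.

Lemma asummable_neg f : asummable f -> nnsummable f^\-.
Proof.
by apply: nnsummable_le => // x; rewrite /funrneg ge_max -normrN ler_norm normr_ge0.
Qed.

Lemma nnsum_norm f : asummable f -> nnsum (fun x => `|f x|) = nnsum f^\+ + nnsum f^\-.
Proof.
move=> sf; rewrite -nnsumD //; [|exact: asummable_pos|exact: asummable_neg].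
congr (nnsum _); apply: funext => x.
by have := congr1 (fun h => h x) (funrposDneg f); rewrite /= !fctE.
Qed.

Lemma ssum_split f p n : (forall x, 0 <= p x) -> (forall x, 0 <= n x) ->
  nnsummable p -> nnsummable n -> (forall x, f x = p x - n x) ->
  ssum f = nnsum p - nnsum n.
Proof.
move=> p0 n0 sp sn fE.
have pos_le x : f^\+ x <= p x by rewrite /funrpos ge_max p0 andbT fE lerBlDr lerDl.
have neg_le x : f^\- x <= n x by rewrite /funrneg ge_max n0 andbT fE opprB lerBlDr lerDl.
have spos := nnsummable_le (@funrpos_ge0 _ _ f) pos_le sp.
have sneg := nnsummable_le (@funrneg_ge0 _ _ f) neg_le sn.
suff : nnsum (fun x => f^\+ x + n x) = nnsum (fun x => f^\- x + p x).
  by rewrite !nnsumD // /ssum; lra.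
congr (nnsum _); apply: funext => x; have := congr1 (fun h => h x) (funrposBneg f).
by rewrite /= !fctE fE; lra.
Qed.

Lemma ssum_nnsum f : (forall x, 0 <= f x) -> nnsummable f -> ssum f = nnsum f.
Proof.
move=> f0 sf; rewrite (@ssum_split _ f (fun _ => 0)) ?nnsummable0 ?nnsum0 ?subr0 //.
by move=> x; rewrite subr0.
Qed.

Lemma ssum0 : ssum (fun _ => 0) = 0.
Proof. by rewrite ssum_nnsum ?nnsummable0 ?nnsum0. Qed.

Lemma norm_ssum_le f : asummable f -> `|ssum f| <= nnsum (fun x => `|f x|).
Proof.
move=> sf; rewrite nnsum_norm // /ssum.
have := nnsum_ge0 (@funrpos_ge0 _ _ f); have := nnsum_ge0 (@funrneg_ge0 _ _ f).
by rewrite ler_norml => *; apply/andP; split; lra.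
Qed.

Lemma asummableD f g : asummable f -> asummable g -> asummable (fun x => f x + g x).
Proof.
move=> sf sg; apply: (asummable_le (fun x => ler_normD (f x) (g x))).
exact: nnsummableD.
Qed.

Lemma asummableZ c f : asummable f -> asummable (fun x => c * f x).
Proof.
move=> sf; apply: (@asummable_le _ (fun x => `|c| * `|f x|)) => [x|].
  by rewrite normrM.
exact: nnsummableZ.
Qed.

Lemma ssumD f g : asummable f -> asummable g ->
  ssum (fun x => f x + g x) = ssum f + ssum g.
Proof.
move=> sf sg; have [sfp sfn] := (asummable_pos sf, asummable_neg sf).
have [sgp sgn] := (asummable_pos sg, asummable_neg sg).
rewrite (@ssum_split _ (fun x => f^\+ x + g^\+ x) (fun x => f^\- x + g^\- x)).
- by rewrite !nnsumD // /ssum; lra.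
- by move=> x; rewrite addr_ge0.
- by move=> x; rewrite addr_ge0.
- exact: nnsummableD.
- exact: nnsummableD.
- by move=> x; have := congr1 (fun h => h x) (funrDB f g); rewrite /= !fctE.
Qed.

Lemma ssumZ c f : asummable f -> ssum (fun x => c * f x) = c * ssum f.
Proof.
move=> sf; have [sfp sfn] := (asummable_pos sf, asummable_neg sf).
have fE x : f x = f^\+ x - f^\- x.
  by have := congr1 (fun h => h x) (funrposBneg f); rewrite /= !fctE.
have [c0|/ltW c0] := lerP 0 c.
  rewrite (@ssum_split _ (fun x => c * f^\+ x) (fun x => c * f^\- x)).
  - by rewrite !nnsumZ // -mulrBr.
  - by move=> x; rewrite mulr_ge0.
  - by move=> x; rewrite mulr_ge0.
  - exact: nnsummableZ.
  - exact: nnsummableZ.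
  - by move=> x; rewrite fE mulrBr.
have Nc0 : 0 <= - c by rewrite oppr_ge0.
rewrite (@ssum_split _ (fun x => - c * f^\- x) (fun x => - c * f^\+ x)).
- by rewrite !nnsumZ // /ssum; lra.
- by move=> x; rewrite mulr_ge0.
- by move=> x; rewrite mulr_ge0.
- exact: nnsummableZ.
- exact: nnsummableZ.
- by move=> x; rewrite fE; lra.
Qed.

Lemma ssum_le f g : asummable f -> asummable g -> (forall x, f x <= g x) ->
  ssum f <= ssum g.
Proof.
move=> sf sg fg; have sgf : asummable (fun x => g x - f x).
  by apply: asummableD => //; apply: asummable_le sf => x; rewrite normrN.
have -> : g = (fun x => f x + (g x - f x)) by apply: funext => x; lra.
have gf0 x : 0 <= g x - f x by rewrite subr_ge0.
rewrite ssumD // lerDl ssum_nnsum ?nnsum_ge0 //.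
by apply: nnsummable_le sgf => // x; exact: ler_norm.
Qed.

Lemma asummable_reindex (e : T -> T) f : bijective e ->
  asummable (fun x => f (e x)) = asummable f.
Proof. by move=> be; rewrite /asummable (nnsummable_reindex (fun x => `|f x|)). Qed.

Lemma ssum_reindex (e : T -> T) f : bijective e -> ssum (fun x => f (e x)) = ssum f.
Proof. by move=> be; rewrite /ssum (nnsum_reindex f^\+) ?(nnsum_reindex f^\-). Qed.

End SignedSum.

Section Fubini.
Variables (R : realType) (T1 T2 : choiceType).

Lemma esum_pair (G : T1 * T2 -> \bar R) : (forall p, (0 <= G p)%E) ->
  \esum_(x in [set: T1]) \esum_(y in [set: T2]) G (x, y)
  = \esum_(p in [set: T1 * T2]) G p.
Proof.
move=> G0; rewrite (esum_esum (J := fun _ => [set: T2]) (a := fun x y => G (x, y))) //.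
by congr esum; [apply/seteqP; split => // -[] | apply: funext => -[]].
Qed.

Section Nonneg.
Variable g : T1 * T2 -> R.
Hypothesis g0 : forall p, 0 <= g p.
Hypothesis sg : nnsummable g.

Let g0E p : (0 <= (g p)%:E)%E. Proof. by rewrite lee_fin. Qed.

Lemma nnsummable_sec x : nnsummable (fun y => g (x, y)).
Proof.
apply: le_lt_trans sg; rewrite -esum_pair //; apply: esum_ge.
exists [set x]; first by split => //; exact: finite_set1.
by rewrite fsbig_set1.
Qed.

Let esum_nnsum_sec : \esum_(x in [set: T1]) (nnsum (fun y => g (x, y)))%:E
  = \esum_(p in [set: T1 * T2]) (g p)%:E.
Proof.
rewrite -esum_pair //; apply: eq_esum => x _.
by rewrite nnsumE // ?nnsummable_sec.
Qed.

Lemma nnsummable_nnsum_sec : nnsummable (fun x => nnsum (fun y => g (x, y))).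
Proof. by rewrite /nnsummable esum_nnsum_sec. Qed.

Lemma nnsum_pair : nnsum (fun x => nnsum (fun y => g (x, y))) = nnsum g.
Proof. by rewrite /nnsum esum_nnsum_sec. Qed.

End Nonneg.

Section Signed.
Variable f : T1 * T2 -> R.
Hypothesis sf : asummable f.

Lemma asummable_sec x : asummable (fun y => f (x, y)).
Proof. exact: (nnsummable_sec (g := fun p => `|f p|)). Qed.

Lemma asummable_ssum_sec : asummable (fun x => ssum (fun y => f (x, y))).
Proof.
apply: (@asummable_le _ _ _ (fun x => nnsum (fun y => `|f (x, y)|))).
  by move=> x; apply: norm_ssum_le; apply: asummable_sec.
exact: (nnsummable_nnsum_sec (g := fun p => `|f p|)).
Qed.

Lemma ssum_pair : ssum (fun x => ssum (fun y => f (x, y))) = ssum f.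
Proof.
have [sP sN] := (asummable_pos sf, asummable_neg sf).
have secE x : ssum (fun y => f (x, y))
    = nnsum (fun y => f^\+ (x, y)) - nnsum (fun y => f^\- (x, y)).
  apply: ssum_split => //; try exact: nnsummable_sec.
  by move=> y; have := congr1 (fun h => h (x, y)) (funrposBneg f); rewrite /= !fctE.
rewrite (ssum_split _ _ _ _ secE) ?nnsum_pair //; try exact: nnsummable_nnsum_sec.
- by move=> x; apply: nnsum_ge0.
- by move=> x; apply: nnsum_ge0.
Qed.

End Signed.
End Fubini.

Lemma lincomb_closed (T : Type) (R : pzRingType) (P : (T -> R) -> Prop) m
    (c : 'I_m -> R) (f : 'I_m -> T -> R) :
  P (fun _ => 0) -> (forall u v, P u -> P v -> P (fun x => u x + v x)) ->
  (forall r u, P u -> P (fun x => r * u x)) -> (forall k, P (f k)) ->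
  P (fun x => \sum_(k < m) c k * f k x).
Proof.
move=> P0 PD PZ; elim: m c f => [|m IH] c f Pf.
  by under eq_fun do rewrite big_ord0.
under eq_fun do rewrite big_ord_recr /=.
by apply: PD; [apply: IH => k | apply: PZ].
Qed.

Section L2.
Variables (R : realType) (d : nat).
Local Notation T := (pt d).
Implicit Types (u v w : T -> R) (c : R).

Lemma l2_sqr_le u x : l2 u -> u x ^+ 2 <= nnsum (fun y => u y ^+ 2).
Proof.
by move=> u2; apply: (nnsum_ge (g := fun y => u y ^+ 2)) => // y; apply: sqr_ge0.
Qed.

Lemma norm_mul_le_sqrD (r s : R) : `|r * s| <= r ^+ 2 + s ^+ 2.
Proof.
rewrite normrM -[r ^+ 2]real_normK ?num_real // -[s ^+ 2]real_normK ?num_real //.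
by have := sqr_ge0 (`|r| - `|s|); have := normr_ge0 r; have := normr_ge0 s; nra.
Qed.

Lemma asummable_mul u v : l2 u -> l2 v -> asummable (fun x => u x * v x).
Proof.
move=> u2 v2; apply: (asummable_le (fun x => norm_mul_le_sqrD (u x) (v x))).
by apply: nnsummableD => // x; apply: sqr_ge0.
Qed.

Lemma l2D u v : l2 u -> l2 v -> l2 (fun x => u x + v x).
Proof.
move=> u2 v2; apply: (@nnsummable_le _ _ _ (fun x => 2 * u x ^+ 2 + 2 * v x ^+ 2)).
- by move=> x; apply: sqr_ge0.
- by move=> x; have := sqr_ge0 (u x - v x); nra.
- have u0 x : 0 <= u x ^+ 2 by apply: sqr_ge0.
  have v0 x : 0 <= v x ^+ 2 by apply: sqr_ge0.
  apply: nnsummableD => [x|x||]; try exact: mulr_ge0.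
    exact: (nnsummableZ (g := fun x => u x ^+ 2)).
  exact: (nnsummableZ (g := fun x => v x ^+ 2)).
Qed.

Lemma l2Z c u : l2 u -> l2 (fun x => c * u x).
Proof.
move=> u2; apply: (@nnsummable_le _ _ _ (fun x => c ^+ 2 * u x ^+ 2)).
- by move=> x; apply: sqr_ge0.
- by move=> x; rewrite exprMn.
- by apply: (nnsummableZ (g := fun x => u x ^+ 2)) => // [|x]; apply: sqr_ge0.
Qed.

Lemma l2_0 : l2 (fun _ : T => 0 : R).
Proof.
by rewrite /l2 esum1 // => x _; rewrite expr0n.
Qed.

Lemma l2_lincomb m (c : 'I_m -> R) (f : 'I_m -> T -> R) :
  (forall k, l2 (f k)) -> l2 (fun x => \sum_(k < m) c k * f k x).
Proof. by apply: lincomb_closed; [exact: l2_0 | exact: l2D | exact: l2Z]. Qed.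

Lemma l2_indicator (y : T) : l2 (fun x => if x == y then 1 else 0 : R).
Proof.
rewrite /l2 (eq_esum (b := fun x => if x \in [set y] then 1%:E else 0%E)).
  by rewrite -esum_mkcond esum_set1 ?ltry.
by move=> x _; rewrite in_set1; case: ifP; rewrite ?expr1n ?expr0n.
Qed.

Definition dot u v : R := ssum (fun x => u x * v x).

Lemma dotC u v : dot u v = dot v u.
Proof. by rewrite /dot; congr ssum; apply: funext => x; rewrite mulrC. Qed.

Lemma dotDl u v w : l2 u -> l2 v -> l2 w ->
  dot (fun x => u x + v x) w = dot u w + dot v w.
Proof.
move=> u2 v2 w2; rewrite /dot -ssumD ?asummable_mul //.
by congr ssum; apply: funext => x; rewrite mulrDl.
Qed.

Lemma dotDr u v w : l2 u -> l2 v -> l2 w ->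
  dot u (fun x => v x + w x) = dot u v + dot u w.
Proof. by move=> u2 v2 w2; rewrite dotC dotDl // ![dot _ u]dotC. Qed.

Lemma dotZl c u v : l2 u -> l2 v -> dot (fun x => c * u x) v = c * dot u v.
Proof.
move=> u2 v2; rewrite /dot -ssumZ ?asummable_mul //.
by congr ssum; apply: funext => x; rewrite mulrA.
Qed.

Lemma dot_sqr_ge u x : l2 u -> u x ^+ 2 <= dot u u.
Proof.
move=> u2; rewrite /dot (_ : (fun x => u x * u x) = fun x => u x ^+ 2).
  by rewrite ssum_nnsum ?l2_sqr_le // => y; apply: sqr_ge0.
by apply: funext => y; rewrite expr2.
Qed.

End L2.

Section Kernel.
Variables (R : realType) (d : nat) (a : pt d -> R).
Hypothesis a_summable : abs_summable a.
Hypothesis a_even : forall z, a z = a (- z).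
Hypothesis a_ge0 : forall z, z != 0 -> 0 <= a z.
Hypothesis a_sum0 : rsum a = 0.
Local Notation T := (pt d).
Implicit Types (f g h u : T -> R) (c : R).

Lemma bij_subl (x : T) : bijective (fun y : T => x - y).
Proof. by exists (fun y : T => x - y) => y; rewrite opprB addrC subrK. Qed.

Lemma bij_swap : bijective (fun p : T * T => (p.2, p.1)).
Proof. by exists (fun p : T * T => (p.2, p.1)) => -[]. Qed.

Lemma a_subC x y : a (y - x) = a (x - y).
Proof. by rewrite a_even opprB. Qed.

Lemma nnsummable_kernel_l g : (forall x, 0 <= g x) -> nnsummable g ->
  nnsummable (fun p : T * T => `|a (p.1 - p.2)| * g p.1).
Proof.
move=> g0 sg; rewrite /nnsummable -esum_pair => [|p]; last by rewrite lee_fin mulr_ge0.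
have secE x : \esum_(y in [set: T]) (`|a (x - y)| * g x)%:E
    = (g x * nnsum (fun z => `|a z|))%:E.
  under eq_esum do rewrite mulrC.
  rewrite (esumZ_nnsum (g := fun y => `|a (x - y)|)) //; last first.
    by rewrite (nnsummable_reindex (fun z => `|a z|) (bij_subl x)).
  by rewrite (nnsum_reindex (fun z => `|a z|) (bij_subl x)).
under eq_esum do rewrite secE mulrC.
by rewrite esumZ_nnsum ?ltry // nnsum_ge0.
Qed.

Lemma nnsummable_kernel_r g : (forall x, 0 <= g x) -> nnsummable g ->
  nnsummable (fun p : T * T => `|a (p.1 - p.2)| * g p.2).
Proof.
move=> g0 sg; rewrite -(nnsummable_reindex _ bij_swap) /=.
under [X in nnsummable X]funext do rewrite a_subC.
exact: nnsummable_kernel_l.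
Qed.

Lemma asummable_conv u x : l2 u -> asummable (fun y => a (x - y) * u y).
Proof.
move=> u2; have u0 y : 0 <= u y ^+ 2 by apply: sqr_ge0.
apply: (@asummable_le _ _ _ (fun y => (1 + nnsum (fun z => u z ^+ 2)) * `|a (x - y)|)).
  move=> y; rewrite normrM mulrC ler_wpM2r //.
  have := l2_sqr_le y u2; rewrite -[u y ^+ 2]real_normK ?num_real //.
  by have := normr_ge0 (u y); nra.
apply: nnsummableZ => //; first by rewrite addr_ge0 ?nnsum_ge0.
by rewrite (nnsummable_reindex (fun z => `|a z|) (bij_subl x)).
Qed.

Lemma opAE u x : opA a u x = ssum (fun y => a (x - y) * u y).
Proof. by []. Qed.

Lemma asummable_bilinear f h : l2 f -> l2 h ->
  asummable (fun p : T * T => h p.1 * (a (p.1 - p.2) * f p.2)).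
Proof.
move=> f2 h2; have h0 x : 0 <= h x ^+ 2 by apply: sqr_ge0.
have f0 x : 0 <= f x ^+ 2 by apply: sqr_ge0.
apply: (@asummable_le _ _ _
  (fun p => `|a (p.1 - p.2)| * h p.1 ^+ 2 + `|a (p.1 - p.2)| * f p.2 ^+ 2)).
  move=> p; rewrite mulrCA normrM -mulrDr ler_wpM2l //; exact: norm_mul_le_sqrD.
apply: nnsummableD => [p|p||]; try exact: mulr_ge0.
  exact: (nnsummable_kernel_l (g := fun x => h x ^+ 2)).
exact: (nnsummable_kernel_r (g := fun x => f x ^+ 2)).
Qed.

Lemma opA_mulr f h x : l2 f ->
  opA a f x * h x = ssum (fun y => h x * (a (x - y) * f y)).
Proof. by move=> f2; rewrite opAE mulrC ssumZ // asummable_conv. Qed.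

Lemma asummable_opA_mulr f h : l2 f -> l2 h -> asummable (fun x => opA a f x * h x).
Proof.
move=> f2 h2; under [X in asummable X]funext do rewrite opA_mulr //.
exact: (asummable_ssum_sec (asummable_bilinear f2 h2)).
Qed.

Lemma dot_opA_sym f h : l2 f -> l2 h -> dot (opA a f) h = dot f (opA a h).
Proof.
move=> f2 h2; rewrite [RHS]dotC /dot.
under eq_fun do rewrite opA_mulr //.
under [in RHS]eq_fun do rewrite opA_mulr //.
rewrite (ssum_pair (asummable_bilinear f2 h2)) (ssum_pair (asummable_bilinear h2 f2)).
rewrite -[RHS](ssum_reindex _ bij_swap) /=; congr ssum; apply: funext => p.
by rewrite a_subC mulrCA mulrA [f _ * _]mulrC -mulrA.
Qed.

Lemma ssum_kernel_l g : asummable g ->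
  ssum (fun p : T * T => a (p.1 - p.2) * g p.1) = 0.
Proof.
move=> sg; have sa x : asummable (fun y => a (x - y)).
  by rewrite (asummable_reindex a (bij_subl x)).
rewrite -ssum_pair; last first.
  apply: (@asummable_le _ _ _ (fun p => `|a (p.1 - p.2)| * `|g p.1|)).
    by move=> p; rewrite normrM.
  exact: (nnsummable_kernel_l (g := fun x => `|g x|)).
under eq_fun do under eq_fun do rewrite /= mulrC.
under eq_fun do rewrite ssumZ // (ssum_reindex a (bij_subl _)).
have -> : ssum a = 0 := a_sum0.
by under eq_fun do rewrite mulr0; exact: ssum0.
Qed.

(* Pairwise, [f x * a (x - y) * f y <= a (x - y) * (f x ^+ 2 + f y ^+ 2) / 2], and each
   half of the right-hand side sums to zero since [a] has total mass zero. *)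
Lemma dot_opA_le0 f : l2 f -> dot (opA a f) f <= 0.
Proof.
move=> f2; pose g x := 2^-1 * f x ^+ 2.
have g0 x : 0 <= g x by rewrite mulr_ge0 // sqr_ge0.
have sg : nnsummable g by apply: nnsummableZ => // x; apply: sqr_ge0.
have sgl : asummable (fun p : T * T => a (p.1 - p.2) * g p.1).
  apply: (@asummable_le _ _ _ (fun p => `|a (p.1 - p.2)| * g p.1)) => [p|].
    by rewrite normrM (ger0_norm (g0 _)).
  exact: (nnsummable_kernel_l (g := g)).
have sgr : asummable (fun p : T * T => a (p.1 - p.2) * g p.2).
  by rewrite -(asummable_reindex _ bij_swap); under eq_fun do rewrite /= a_subC.
have swapE : ssum (fun p : T * T => a (p.1 - p.2) * g p.2)
    = ssum (fun p : T * T => a (p.1 - p.2) * g p.1).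
  by rewrite -(ssum_reindex _ bij_swap); under eq_fun do rewrite /= a_subC.
rewrite /dot; under eq_fun do rewrite opA_mulr //.
rewrite (ssum_pair (asummable_bilinear f2 f2)).
apply: (le_trans (ssum_le (asummable_bilinear f2 f2) (asummableD sgl sgr) _)).
  move=> [x y] /=; have [<-|nxy] := eqVneq x y; first by rewrite subrr /g; nra.
  have axy : 0 <= a (x - y) by apply: a_ge0; rewrite subr_eq0.
  by have := mulr_ge0 axy (sqr_ge0 (f x - f y)); rewrite /g; nra.
rewrite ssumD // swapE ssum_kernel_l ?addr0 //.
by apply: asummable_le sg => x; rewrite (ger0_norm (g0 _)).
Qed.

Lemma opAD f h x : l2 f -> l2 h ->
  opA a (fun y => f y + h y) x = opA a f x + opA a h x.
Proof.
move=> f2 h2; rewrite !opAE -ssumD ?asummable_conv //.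
by congr ssum; apply: funext => y; rewrite mulrDr.
Qed.

Lemma opAZ c f x : l2 f -> opA a (fun y => c * f y) x = c * opA a f x.
Proof.
move=> f2; rewrite !opAE -ssumZ ?asummable_conv //.
by congr ssum; apply: funext => y; rewrite mulrCA.
Qed.

End Kernel.

Lemma widen_lift_max m (k : 'I_m) : widen_ord (leqnSn m) k = lift ord_max k.
Proof. by apply: val_inj; rewrite /= /bump leqNgt ltn_ord. Qed.

Lemma dependent_at_points (T : Type) (F : fieldType) m n (v : 'I_m -> T -> F)
    (w : T -> F) (xs : 'I_n -> T) : (n <= m)%N ->
  exists (c : 'I_m -> F) (c' : F), ((exists k, c k != 0) \/ c' != 0) /\
    forall i, \sum_(k < m) c k * v k (xs i) + c' * w (xs i) = 0.
Proof.
move=> nm; pose M : 'M[F]_(m.+1, n) := \matrix_(k, i) oapp v w (unlift ord_max k) (xs i).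
have : kermx M != 0.
  by rewrite -mxrank_eq0 mxrank_ker -lt0n subn_gt0 (leq_ltn_trans (rank_leq_col M)).
move=> /rowV0Pn [r /sub_kermxP rM r_neq0].
exists (fun k => r 0 (lift ord_max k)), (r 0 ord_max); split.
  have [j rj] : exists j, r 0 j != 0.
    apply/existsP; apply: contraR r_neq0 => /existsPn r0.
    by apply/eqP/rowP => j; rewrite mxE; apply/eqP/negPn/r0.
  by case: (unliftP ord_max j) rj => [k ->|->] rj; [left; exists k | right].
move=> i; have rMi : (r *m M) 0 i = 0 by rewrite rM mxE.
rewrite -[RHS]rMi mxE big_ord_recr /= /M mxE unlift_none /=.
by congr (_ + _); apply: eq_bigr => k _; rewrite mxE widen_lift_max liftK.
Qed.

Section Perturbation.
Variables (R : realType) (d N : nat) (a : pt d -> R) (xs : 'I_N -> pt d) (beta : R).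
Hypothesis a_summable : abs_summable a.
Hypothesis a_even : forall z, a z = a (- z).
Hypothesis a_ge0 : forall z, z != 0 -> 0 <= a z.
Hypothesis a_sum0 : rsum a = 0.
Local Notation T := (pt d).
Local Notation H := (opH a xs beta).
Implicit Types (u v w : T -> R) (c lam mu : R).

Definition potential u x : R := \sum_(i < N) (if x == xs i then u (xs i) else 0).

Lemma opHE u x : H u x = opA a u x + beta * potential u x.
Proof. by []. Qed.

Lemma potential_mulC u v x : potential u x * v x = u x * potential v x.
Proof.
rewrite /potential mulr_suml mulr_sumr; apply: eq_bigr => i _.
by case: eqP => [->|_]; rewrite ?mul0r ?mulr0 // mulrC.
Qed.

Lemma potentialD u v x :
  potential (fun y => u y + v y) x = potential u x + potential v x.
Proof.
rewrite /potential -big_split /=; apply: eq_bigr => i _.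
by case: eqP => _ //; rewrite addr0.
Qed.

Lemma potentialZ c u x : potential (fun y => c * u y) x = c * potential u x.
Proof.
rewrite /potential mulr_sumr; apply: eq_bigr => i _.
by case: eqP => _ //; rewrite mulr0.
Qed.

Lemma potential_eq0 u x : (forall i, u (xs i) = 0) -> potential u x = 0.
Proof. by move=> u0; rewrite /potential big1 // => i _; rewrite u0; case: eqP. Qed.

Lemma l2_potential u : l2 (potential u).
Proof.
have -> : potential u = fun x => \sum_(i < N) u (xs i) * (if x == xs i then 1 else 0).
  by apply: funext => x; apply: eq_bigr => i _; case: eqP; rewrite ?mulr1 ?mulr0.
by apply: l2_lincomb => i; apply: l2_indicator.
Qed.

Lemma opHD u v x : l2 u -> l2 v -> H (fun y => u y + v y) x = H u x + H v x.
Proof. by move=> u2 v2; rewrite !opHE opAD // potentialD; ring. Qed.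

Lemma opHZ c u x : l2 u -> H (fun y => c * u y) x = c * H u x.
Proof. by move=> u2; rewrite !opHE opAZ // potentialZ; ring. Qed.

Lemma dot_opHE u v : l2 u -> l2 v ->
  dot (H u) v = dot (opA a u) v + beta * dot (potential u) v.
Proof.
move=> u2 v2; have sP := asummable_mul (l2_potential u) v2.
rewrite /dot -(ssumZ beta sP) -ssumD; last 2 first.
- exact: asummable_opA_mulr.
- exact: asummableZ.
by under eq_fun do rewrite opHE mulrDl -mulrA.
Qed.

Lemma dot_opH_sym u v : l2 u -> l2 v -> dot (H u) v = dot u (H v).
Proof.
move=> u2 v2; rewrite [RHS]dotC !dot_opHE // dot_opA_sym // [dot (opA a v) u]dotC.
congr (_ + beta * _); rewrite /dot; congr ssum; apply: funext => x.
by rewrite potential_mulC mulrC.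
Qed.

Definition eigvec lam u := l2 u /\ forall x, H u x = lam * u x.

Lemma eigvecD lam u v : eigvec lam u -> eigvec lam v -> eigvec lam (fun x => u x + v x).
Proof.
move=> [u2 Hu] [v2 Hv]; split; first exact: l2D.
by move=> x; rewrite opHD // Hu Hv mulrDr.
Qed.

Lemma eigvecZ lam c u : eigvec lam u -> eigvec lam (fun x => c * u x).
Proof. by move=> [u2 Hu]; split => [|x]; [exact: l2Z | rewrite opHZ // Hu mulrCA]. Qed.

Lemma eigvec_sum lam m (c : 'I_m -> R) (v : 'I_m -> T -> R) :
  (forall k, eigvec lam (v k)) -> eigvec lam (fun x => \sum_(k < m) c k * v k x).
Proof.
apply: lincomb_closed; [|exact: eigvecD | exact: eigvecZ].
split=> [|x]; first exact: l2_0.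
rewrite mulr0 opHE potential_eq0 // opAE.
by under eq_fun do rewrite mulr0; rewrite ssum0 mulr0 addr0.
Qed.

Lemma dot_eigvec_eq0 lam mu v w : eigvec lam v -> eigvec mu w -> lam != mu ->
  dot v w = 0.
Proof.
move=> [v2 Hv] [w2 Hw] lam_mu.
have Hv_w : dot (H v) w = lam * dot v w by rewrite (funext Hv) (dotZl lam v2 w2).
have v_Hw : dot v (H w) = mu * dot v w.
  by rewrite dotC (funext Hw) (dotZl mu w2 v2) dotC.
move: (dot_opH_sym v2 w2); rewrite Hv_w v_Hw => /eqP.
by rewrite -subr_eq0 -mulrBl mulf_eq0 subr_eq0 (negPf lam_mu) => /eqP.
Qed.

Lemma eigvec_vanishing lam mu v w : eigvec lam v -> eigvec mu w ->
  0 < lam -> 0 < mu -> lam != mu -> (forall i, v (xs i) + w (xs i) = 0) ->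
  forall x, v x = 0 /\ w x = 0.
Proof.
move=> v_eig w_eig lam_gt0 mu_gt0 lam_mu vw0 x.
have vw_orth := dot_eigvec_eq0 v_eig w_eig lam_mu.
move: v_eig w_eig => [v2 Hv] [w2 Hw]; pose u y := v y + w y.
have u2 : l2 u by exact: l2D.
have Au : opA a u = fun y => lam * v y + mu * w y.
  apply: funext => y; rewrite -Hv -Hw -opHD // opHE potential_eq0 ?mulr0 ?addr0 //.
have quad : dot (opA a u) u = lam * dot v v + mu * dot w w.
  rewrite Au (dotDl (l2Z lam v2) (l2Z mu w2) u2) (dotZl lam v2 u2) (dotZl mu w2 u2).
  by rewrite (dotDr v2 v2 w2) (dotDr w2 v2 w2) [dot w v]dotC vw_orth addr0 add0r.
have := dot_opA_le0 a_summable a_even a_ge0 a_sum0 u2; rewrite quad.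
have := dot_sqr_ge x v2; have := dot_sqr_ge x w2.
have := sqr_ge0 (v x); have := sqr_ge0 (w x) => *.
have [vx0 wx0] : v x ^+ 2 = 0 /\ w x ^+ 2 = 0 by split; nra.
by split; apply/eqP; rewrite -sqrf_eq0; apply/eqP.
Qed.

End Perturbation.

Theorem corollary1 (R : realType) (d N : nat) (a : pt d -> R)
  (xs : 'I_N -> pt d) (beta bc lam0 : R) :
  (1 <= d)%N -> (2 <= N)%N ->
  rw_kernel a -> irreducible_kernel a -> (condF a \/ condHT a) ->
  injective xs ->
  is_beta_c a xs bc -> bc < beta ->
  largest_pos_eigenvalue (opH a xs beta) lam0 ->
  forall lam : R, 0 < lam -> is_eigenvalue (opH a xs beta) lam -> lam <> lam0 ->
    eigenspace_dim_le (opH a xs beta) lam N.-1.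
Proof.
move=> _ N_ge2 [_ a_ge0 a_even a_summable a_sum0] _ _ _ _ _.
move=> [lam0_gt0 [w [w2 w_neq0 w_eig]] _] lam lam_gt0 _ /eqP lam_neq v v_eig.
have [x0 wx0] : exists x0, w x0 != 0.
  apply: contrapT => w0; apply: w_neq0; apply: funext => x.
  by apply: contrapT => wx; apply: w0; exists x; apply/eqP.
have N_le : (N <= N.-1.+1)%N by rewrite prednK // (leq_trans _ N_ge2).
have [c [c' [c_neq0 c_vanish]]] := dependent_at_points v w xs N_le.
have c_eig := eigvec_sum a_summable c v_eig.
have c'w_eig := eigvecZ a_summable c' (conj w2 w_eig).
have zero := eigvec_vanishing a_summable a_even a_ge0 a_sum0 c_eig c'w_eig
  lam_gt0 lam0_gt0 lam_neq c_vanish.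
exists c; split=> [|x]; last by case: (zero x).
case: c_neq0 => // c'_neq0; case: (zero x0) => _ /eqP.
by rewrite mulf_eq0 (negPf c'_neq0) (negPf wx0).
Qed.
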